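(* Let $D$ be a perfect subgroup of a group $G$, let $\pi\colon S\to G$ be a surjective group homomorphism with central kernel, and let $\tilde D$ be the smallest subgroup of $S$ with $\pi(\tilde D)=D$. Then the sandwich classification theorem holds for $L(D,G)$ if and only if it holds for $L(\tilde D,S)$, and $\pi$ induces a bijection from the set of $\tilde D$-full subgroups of $S$ onto the set of $D$-full subgroups of $G$.
   Context: A group is perfect if it equals its commutator subgroup; $X^Y$ denotes the subgroup generated by all $b^{-1}ab$, $a\in X$, $b\in Y$. $L(D,G)$ is the lattice of subgroups of $G$ containing $D$; $F\in L(D,G)$ is $D$-full if $D^F=F$. A sandwich of $L(D,G)$ is the set of all subgroups $H$ with $F\le H\le N_G(F)$ for a fixed $D$-full subgroup $F$. The lattice $L(D,G)$ satisfies the sandwich classification theorem if it is the union of its sandwiches, i.e. for every $H\in L(D,G)$ the subgroup $D^H$ is $D$-full and $H\le N_G(D^H)$. The smallest subgroup $\tilde D$ with $\pi(\tilde D)=D$ exists (it is contained in every subgroup mapping onto $D$). *)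

(* the statement concerns arbitrary (possibly infinite) groups,
   so we use an explicit record of groups rather than MathComp finGroupType. *)
Set Implicit Arguments.

Record grp := Grp {
  carrier :> Type;
  gmul : carrier -> carrier -> carrier;
  ginv : carrier -> carrier;
  gone : carrier;
  gmulA : forall x y z, gmul x (gmul y z) = gmul (gmul x y) z;
  gmul1g : forall x, gmul gone x = x;
  gmulVg : forall x, gmul (ginv x) x = gone
}.

Arguments gmul {g} x y.
Arguments ginv {g} x.
Arguments gone {g}.

Definition gset (G : grp) := G -> Prop.

Definition subset {G : grp} (A B : gset G) : Prop := forall x, A x -> B x.
Definition seteq {G : grp} (A B : gset G) : Prop := forall x, A x <-> B x.

Definition subgroup {G : grp} (A : gset G) : Prop :=
  A gone /\ (forall x y, A x -> A y -> A (gmul x y)) /\ (forall x, A x -> A (ginv x)).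

Definition gen {G : grp} (A : gset G) : gset G :=
  fun x => forall H : gset G, subgroup H -> subset A H -> H x.

Definition conjg {G : grp} (a b : G) : G := gmul (gmul (ginv b) a) b.

(* X^Y : subgroup generated by all b^{-1} a b, a in X, b in Y *)
Definition conjgen {G : grp} (X Y : gset G) : gset G :=
  gen (fun z => exists a b, X a /\ Y b /\ z = conjg a b).

Definition commg {G : grp} (a b : G) : G :=
  gmul (gmul (gmul (ginv a) (ginv b)) a) b.

Definition derived {G : grp} (D : gset G) : gset G :=
  gen (fun z => exists a b, D a /\ D b /\ z = commg a b).

Definition perfect {G : grp} (D : gset G) : Prop := subgroup D /\ seteq D (derived D).

Definition normalizer {G : grp} (F : gset G) : gset G :=
  fun g => forall x, F x <-> F (conjg x g).

Definition full {G : grp} (D F : gset G) : Prop :=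
  subgroup F /\ subset D F /\ seteq (conjgen D F) F.

Definition sandwich_classification {G : grp} (D : gset G) : Prop :=
  forall H : gset G, subgroup H -> subset D H ->
    full D (conjgen D H) /\ subset H (normalizer (conjgen D H)).

Definition image {S G : grp} (f : S -> G) (A : gset S) : gset G :=
  fun g => exists s, A s /\ f s = g.

(* Since ker pi is central, commutators in S only depend on the images of
   their entries in G.  Hence a subgroup X of S with X <= [X, X] lies in every
   subgroup Y with pi X <= pi Y: each generator [a, b] of [X, X] is also the
   commutator of lifts of pi a and pi b taken in Y.  The minimal lift D~ of D
   is such an X, since [D~, D~] maps onto [D, D] = D; so are all groups D~^H,
   in particular every D~-full F = D~^F.  Thus D~-full subgroups are
   determined by their images, and since pi (D~^H) = D^(pi H), fullness of
   D~^H and of D^(pi H) are equivalent; both claims follow. *)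

From Stdlib Require Import FunctionalExtensionality PropExtensionality.

Local Infix "**" := gmul (at level 40, left associativity).

Lemma seteq_eq {G : grp} (A B : gset G) : seteq A B -> A = B.
Proof.
  intro H. apply functional_extensionality; intro x.
  apply propositional_extensionality, H.
Qed.

Lemma eq_seteq {G : grp} (A B : gset G) : A = B -> seteq A B.
Proof. intros <- x; tauto. Qed.

Lemma eq_subset {G : grp} (A B : gset G) : A = B -> subset A B.
Proof. intros <- x Hx; exact Hx. Qed.

Section GroupLaws.

Context {G : grp}.
Implicit Types x y z : G.

Lemma mulgA x y z : x ** (y ** z) = (x ** y) ** z.
Proof. apply gmulA. Qed.

Lemma mulVg x : ginv x ** x = gone.
Proof. apply gmulVg. Qed.

Lemma mul1g x : gone ** x = x.
Proof. apply gmul1g. Qed.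

Lemma mulgA' x y z : (x ** y) ** z = x ** (y ** z).
Proof. symmetry; apply mulgA. Qed.

Lemma mulKg x y : ginv x ** (x ** y) = y.
Proof. rewrite mulgA, mulVg, mul1g; reflexivity. Qed.

Lemma mulgV x : x ** ginv x = gone.
Proof.
  assert (Hidem : (x ** ginv x) ** (x ** ginv x) = x ** ginv x).
  { rewrite mulgA', (mulgA (ginv x) x), mulVg, mul1g. reflexivity. }
  rewrite <- (mulKg (x ** ginv x) (x ** ginv x)) at 1.
  rewrite Hidem, mulVg. reflexivity.
Qed.

Lemma mulg1 x : x ** gone = x.
Proof. rewrite <- (mulVg x), mulgA, mulgV, mul1g; reflexivity. Qed.

Lemma mulKVg x y : x ** (ginv x ** y) = y.
Proof. rewrite mulgA, mulgV, mul1g; reflexivity. Qed.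

Lemma invg_unique x y : x ** y = gone -> ginv x = y.
Proof. intro H. rewrite <- (mulKg x y), H, mulg1. reflexivity. Qed.

Lemma invgK x : ginv (ginv x) = x.
Proof. apply invg_unique, mulVg. Qed.

Lemma invMg x y : ginv (x ** y) = ginv y ** ginv x.
Proof. apply invg_unique. rewrite mulgA', mulKVg, mulgV. reflexivity. Qed.

Lemma invg1 : ginv (@gone G) = gone.
Proof. apply invg_unique, mul1g. Qed.

End GroupLaws.

Ltac gsimpl :=
  repeat rewrite ?mulgA', ?mulKg, ?mulKVg, ?mulVg, ?mulgV, ?mul1g, ?mulg1,
    ?invMg, ?invgK, ?invg1.

Section Generation.

Context {G : grp}.
Implicit Types X Y H : gset G.

Lemma gen_sub X : subset X (gen X).
Proof. intros x Hx H _ HXH. apply HXH, Hx. Qed.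

Lemma gen_subgroup X : subgroup (gen X).
Proof.
  split; [|split].
  - intros H [H1 _] _; exact H1.
  - intros x y Hx Hy H HH HXH. pose proof HH as [_ [HM _]]. apply HM; [apply Hx | apply Hy]; auto.
  - intros x Hx H HH HXH. pose proof HH as [_ [_ HV]]. apply HV, Hx; auto.
Qed.

Lemma gen_min X H : subgroup H -> subset X H -> subset (gen X) H.
Proof. intros HH HXH x Hx. apply Hx; auto. Qed.

Lemma gen_mono X Y : subset X Y -> subset (gen X) (gen Y).
Proof.
  intros HXY. apply gen_min; [apply gen_subgroup|].
  intros x Hx. apply gen_sub, HXY, Hx.
Qed.

End Generation.

Section Morphisms.

Context {A B : grp}.
Context {f : A -> B}.
Hypothesis f_hom : forall x y, f (x ** y) = f x ** f y.

Lemma morph1 : f gone = gone.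
Proof.
  assert (H : f gone ** f gone = f gone ** gone).
  { rewrite <- f_hom, mul1g, mulg1; reflexivity. }
  rewrite <- (mulKg (f gone) (f gone)), H. gsimpl. reflexivity.
Qed.

Lemma morphV x : f (ginv x) = ginv (f x).
Proof. symmetry; apply invg_unique. rewrite <- f_hom, mulgV. apply morph1. Qed.

Lemma morph_conjg a b : f (conjg a b) = conjg (f a) (f b).
Proof. unfold conjg. rewrite !f_hom, !morphV. reflexivity. Qed.

Lemma morph_commg a b : f (commg a b) = commg (f a) (f b).
Proof. unfold commg. rewrite !f_hom, !morphV. reflexivity. Qed.

Lemma image_subgroup (H : gset A) : subgroup H -> subgroup (image f H).
Proof.
  intros [H1 [HM HV]]. split; [|split].
  - exists gone. split; [exact H1 | apply morph1].
  - intros x y [a [Ha <-]] [b [Hb <-]]. exists (a ** b). auto.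
  - intros x [a [Ha <-]]. exists (ginv a). split; [auto | apply morphV].
Qed.

Lemma preimage_subgroup (H : gset B) : subgroup H -> subgroup (fun a => H (f a)).
Proof.
  intros [H1 [HM HV]]. split; [|split].
  - rewrite morph1. exact H1.
  - intros x y Hx Hy. rewrite f_hom. auto.
  - intros x Hx. rewrite morphV. auto.
Qed.

Lemma image_gen_sub (X : gset A) : subset (image f (gen X)) (gen (image f X)).
Proof.
  intros y [x [Hx <-]].
  apply (Hx (fun a => gen (image f X) (f a))).
  - apply preimage_subgroup, gen_subgroup.
  - intros a Ha. apply gen_sub. exists a; auto.
Qed.

Lemma image_gen (X : gset A) : image f (gen X) = gen (image f X).
Proof.
  apply seteq_eq; intro y; split; [apply image_gen_sub|].
  apply gen_min; [apply image_subgroup, gen_subgroup|].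
  intros z [a [Ha <-]]. exists a; split; auto. apply gen_sub; auto.
Qed.

Lemma image_conjgen (X Y : gset A) :
  image f (conjgen X Y) = conjgen (image f X) (image f Y).
Proof.
  unfold conjgen. rewrite image_gen. f_equal.
  apply seteq_eq. intro z; split.
  - intros [w [[a [b [Ha [Hb ->]]]] <-]].
    exists (f a), (f b). repeat split; [exists a | exists b | apply morph_conjg]; auto.
  - intros [a' [b' [[a [Ha <-]] [[b [Hb <-]] ->]]]].
    exists (conjg a b). split; [exists a, b; auto | apply morph_conjg].
Qed.

Lemma image_derived (X : gset A) : image f (derived X) = derived (image f X).
Proof.
  unfold derived. rewrite image_gen. f_equal.
  apply seteq_eq. intro z; split.
  - intros [w [[a [b [Ha [Hb ->]]]] <-]].
    exists (f a), (f b). repeat split; [exists a | exists b | apply morph_commg]; auto.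
  - intros [a' [b' [[a [Ha <-]] [[b [Hb <-]] ->]]]].
    exists (commg a b). split; [exists a, b; auto | apply morph_commg].
Qed.

Lemma image_preimage :
  (forall b, exists a, f a = b) -> forall H : gset B, image f (fun a => H (f a)) = H.
Proof.
  intros f_surj H. apply seteq_eq; intro b; split.
  - intros [a [Ha <-]]; exact Ha.
  - intro Hb. destruct (f_surj b) as [a Ha]. exists a. rewrite Ha; auto.
Qed.

End Morphisms.

Section Conjugation.

Context {G : grp}.
Implicit Types X Y : gset G.

Lemma conjgMl (b x y : G) : conjg (x ** y) b = conjg x b ** conjg y b.
Proof. unfold conjg. gsimpl. reflexivity. Qed.

Lemma conjgM (a b c : G) : conjg (conjg a b) c = conjg a (b ** c).
Proof. unfold conjg. gsimpl. reflexivity. Qed.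

Lemma conjg1 (a : G) : conjg a gone = a.
Proof. unfold conjg. gsimpl. reflexivity. Qed.

Lemma conjgen_subgroup X Y : subgroup (conjgen X Y).
Proof. apply gen_subgroup. Qed.

Lemma sub_conjgen X Y : Y gone -> subset X (conjgen X Y).
Proof.
  intros Y1 a Ha. apply gen_sub. exists a, gone.
  repeat split; auto. symmetry; apply conjg1.
Qed.

Lemma conjgen_conjg X Y g x :
  subgroup Y -> Y g -> conjgen X Y x -> conjgen X Y (conjg x g).
Proof.
  intros [_ [HM _]] Hg Hx.
  set (gens := fun z => exists a b, X a /\ Y b /\ z = conjg a b).
  apply (gen_mono (image (fun z => conjg z g) gens)).
  - intros z [w [[a [b [Ha [Hb ->]]]] <-]].
    exists a, (b ** g). repeat split; auto. apply conjgM.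
  - apply image_gen_sub; [intros; apply conjgMl | exists x; auto].
Qed.

Lemma normalizer_conjgen X Y : subgroup Y -> subset Y (normalizer (conjgen X Y)).
Proof.
  intros HY g Hg x. split; [apply conjgen_conjg; auto|].
  intro Hx. destruct HY as [Y1 [YM YV]].
  pose proof (conjgen_conjg X Y (ginv g) _ (conj Y1 (conj YM YV)) (YV _ Hg) Hx) as H.
  rewrite conjgM, mulgV, conjg1 in H. exact H.
Qed.

Lemma conjgen_sub_derived X Y :
  subset X (derived X) -> subset (conjgen X Y) (derived (conjgen X Y)).
Proof.
  intro HX. apply gen_min; [apply gen_subgroup|].
  intros z [a [b [Ha [Hb ->]]]].
  set (comms := fun z => exists c d, X c /\ X d /\ z = commg c d).
  apply (gen_mono (image (fun w => conjg w b) comms)).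
  - intros z [w [[c [d [Hc [Hd ->]]]] <-]].
    exists (conjg c b), (conjg d b). repeat split.
    + apply gen_sub. exists c, b; auto.
    + apply gen_sub. exists d, b; auto.
    + apply (morph_commg (f := fun w => conjg w b)). intros; apply conjgMl.
  - apply image_gen_sub; [intros; apply conjgMl | exists a; split; [apply HX, Ha | reflexivity]].
Qed.

Lemma full_sub_derived X F : subset X (derived X) -> full X F -> subset F (derived F).
Proof.
  intros HX [_ [_ HF]]. apply seteq_eq in HF. rewrite <- HF.
  apply conjgen_sub_derived, HX.
Qed.

End Conjugation.

Section CentralExtension.

Context {S G : grp}.
Context {pi : S -> G}.
Hypothesis pi_hom : forall x y, pi (x ** y) = pi x ** pi y.
Hypothesis pi_central : forall k : S, pi k = gone -> forall s : S, k ** s = s ** k.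

Lemma fibre_ker (x y : S) : pi x = pi y -> exists k, pi k = gone /\ x = y ** k.
Proof.
  intro E. exists (ginv y ** x). split.
  - rewrite pi_hom, (morphV pi_hom), E. apply mulVg.
  - gsimpl. reflexivity.
Qed.

Lemma commg_mulr_ker (y z k l : S) :
  pi k = gone -> pi l = gone -> commg (y ** k) (z ** l) = commg y z.
Proof.
  intros Hk Hl.
  assert (Hk' : pi (ginv k) = gone) by (rewrite (morphV pi_hom), Hk; apply invg1).
  assert (Hl' : pi (ginv l) = gone) by (rewrite (morphV pi_hom), Hl; apply invg1).
  unfold commg. gsimpl.
  rewrite (pi_central _ Hk'). gsimpl.
  rewrite (pi_central _ Hl'). gsimpl.
  rewrite (pi_central _ Hl (ginv k ** ginv l)). gsimpl.
  rewrite (pi_central _ Hk (z ** ginv k)). gsimpl. reflexivity.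
Qed.

Lemma sub_of_image_sub (X Y : gset S) :
  subset X (derived X) -> subgroup Y -> subset (image pi X) (image pi Y) -> subset X Y.
Proof.
  intros HX HY HXY x Hx. apply HX in Hx. revert x Hx.
  apply gen_min; [exact HY|].
  intros z [a [b [Ha [Hb ->]]]].
  destruct (HXY (pi a)) as [a' [Ha' Ea]]; [exists a; auto|].
  destruct (HXY (pi b)) as [b' [Hb' Eb]]; [exists b; auto|].
  destruct (fibre_ker a a' (eq_sym Ea)) as [k [Hk ->]].
  destruct (fibre_ker b b' (eq_sym Eb)) as [l [Hl ->]].
  rewrite commg_mulr_ker by assumption.
  destruct HY as [_ [YM YV]]. unfold commg. auto.
Qed.

End CentralExtension.
Section SmallestLift.

Context {S G : grp} {pi : S -> G}.
Hypothesis pi_hom : forall x y, pi (x ** y) = pi x ** pi y.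
Hypothesis pi_surj : forall g, exists s, pi s = g.
Hypothesis pi_central : forall k : S, pi k = gone -> forall s : S, k ** s = s ** k.
Context {D : gset G} {Dt : gset S}.
Hypothesis D_perf : perfect D.
Hypothesis Dt_im : image pi Dt = D.
Hypothesis Dt_min : forall H, subgroup H -> seteq (image pi H) D -> subset Dt H.

Lemma lift_sub_derived : subset Dt (derived Dt).
Proof.
  apply Dt_min; [apply gen_subgroup|]. apply eq_seteq.
  rewrite (image_derived pi_hom), Dt_im.
  destruct D_perf as [_ HD]. symmetry; apply seteq_eq, HD.
Qed.

Lemma image_conjgen_lift (Y : gset S) : image pi (conjgen Dt Y) = conjgen D (image pi Y).
Proof. rewrite (image_conjgen pi_hom), Dt_im. reflexivity. Qed.

Lemma image_lift_sub (H : gset S) : subset Dt H -> subset D (image pi H).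
Proof. rewrite <- Dt_im. intros HDH g [a [Ha <-]]. exists a; auto. Qed.

Lemma full_image (F : gset S) : full Dt F -> full D (image pi F).
Proof.
  intros [HF [HDF HFF]]. apply seteq_eq in HFF.
  split; [apply (image_subgroup pi_hom), HF | split; [apply image_lift_sub, HDF|]].
  rewrite <- image_conjgen_lift, HFF. apply eq_seteq; reflexivity.
Qed.

Lemma conjgen_lift_sub (Y Z : gset S) :
  subgroup Z -> subset (image pi (conjgen Dt Y)) (image pi Z) -> subset (conjgen Dt Y) Z.
Proof.
  apply (sub_of_image_sub pi_hom pi_central), conjgen_sub_derived, lift_sub_derived.
Qed.

Lemma full_conjgen_lift (Y : gset S) :
  Y gone -> full D (conjgen D (image pi Y)) -> full Dt (conjgen Dt Y).
Proof.
  intros Y1 [_ [_ Hfull]]. apply seteq_eq in Hfull.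
  assert (Eim : image pi (conjgen Dt (conjgen Dt Y)) = image pi (conjgen Dt Y)).
  { rewrite !image_conjgen_lift. exact Hfull. }
  split; [apply conjgen_subgroup | split; [apply sub_conjgen, Y1|]].
  intro x; split; apply conjgen_lift_sub; try apply conjgen_subgroup.
  - apply eq_subset, Eim.
  - apply eq_subset; symmetry; exact Eim.
Qed.

Lemma full_image_inj (F1 F2 : gset S) :
  full Dt F1 -> full Dt F2 -> seteq (image pi F1) (image pi F2) -> seteq F1 F2.
Proof.
  assert (Hsub : forall F F', full Dt F -> full Dt F' ->
                 image pi F = image pi F' -> subset F F').
  { intros F F' HF HF' E. apply (sub_of_image_sub pi_hom pi_central).
    - exact (full_sub_derived _ _ lift_sub_derived HF).
    - apply HF'.
    - apply eq_subset, E. }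
  intros HF1 HF2 HI. apply seteq_eq in HI.
  intro x; split; apply Hsub; auto.
Qed.

Lemma full_image_surj (E : gset G) :
  full D E -> exists F, full Dt F /\ seteq (image pi F) E.
Proof.
  intros HE. pose proof HE as [[E1 _] [_ HEE]]. apply seteq_eq in HEE.
  exists (conjgen Dt (fun s => E (pi s))).
  rewrite image_conjgen_lift, (image_preimage pi_surj), HEE.
  split; [|apply eq_seteq; reflexivity].
  apply full_conjgen_lift.
  - rewrite (morph1 pi_hom). exact E1.
  - rewrite (image_preimage pi_surj), HEE. exact HE.
Qed.

Lemma sandwich_classification_lift :
  sandwich_classification D -> sandwich_classification Dt.
Proof.
  intros SC H HH HDH. split; [|apply normalizer_conjgen, HH].
  apply full_conjgen_lift; [apply HH|].
  apply SC; [apply (image_subgroup pi_hom), HH | apply image_lift_sub, HDH].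
Qed.

Lemma sandwich_classification_descend :
  sandwich_classification Dt -> sandwich_classification D.
Proof.
  intros SC H HH HDH. split; [|apply normalizer_conjgen, HH].
  destruct (SC (fun s => H (pi s))) as [Hfull _].
  - apply (preimage_subgroup pi_hom), HH.
  - intros a Ha. apply HDH. rewrite <- Dt_im. exists a; auto.
  - apply full_image in Hfull.
    rewrite image_conjgen_lift, (image_preimage pi_surj) in Hfull. exact Hfull.
Qed.

End SmallestLift.

Theorem lemma2p4 (S G : grp) (pi : S -> G)
  (pi_hom : forall x y : S, pi (gmul x y) = gmul (pi x) (pi y))
  (pi_surj : forall g : G, exists s : S, pi s = g)
  (pi_central : forall k : S, pi k = gone -> forall s : S, gmul k s = gmul s k)
  (D : gset G) (D_sub : subgroup D) (D_perf : perfect D)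
  (Dt : gset S) (Dt_sub : subgroup Dt) (Dt_im : seteq (image pi Dt) D)
  (Dt_min : forall H : gset S, subgroup H -> seteq (image pi H) D -> subset Dt H) :
  (sandwich_classification D <-> sandwich_classification Dt) /\
  (forall F : gset S, full Dt F -> full D (image pi F)) /\
  (forall F1 F2 : gset S, full Dt F1 -> full Dt F2 ->
      seteq (image pi F1) (image pi F2) -> seteq F1 F2) /\
  (forall E : gset G, full D E -> exists F : gset S, full Dt F /\ seteq (image pi F) E).
Proof.
  apply seteq_eq in Dt_im.
  split; [split | split; [|split]].
  - exact (sandwich_classification_lift pi_hom pi_central D_perf Dt_im Dt_min).
  - exact (sandwich_classification_descend pi_hom pi_surj Dt_im).
  - exact (full_image pi_hom Dt_im).
  - exact (full_image_inj pi_hom pi_central D_perf Dt_im Dt_min).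
  - exact (full_image_surj pi_hom pi_surj pi_central D_perf Dt_im Dt_min).
Qed.
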